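(* Let $\kappa=[2\ell]$ with $\ell\in\mathbb Z$. Then $g^{(n)}(\kappa)\in\mathbb Z[q,q^{-1}]$ for all $n\ge0$.
   Context: $q$ is an indeterminate, $[n]=\frac{q^n-q^{-n}}{q-q^{-1}}$ for $n\in\mathbb Z$, $[n]!=[1]\cdots[n]$, $[0]!=1$. The polynomials $g_n(x)$ are $g_{2m}(x)=\prod_{i=0}^{m-1}(x^2-[2i]^2)$ and $g_{2m+1}(x)=x\prod_{i=1}^m(x^2-[2i]^2)$, and $g^{(n)}=g_n/[n]!$. *)

From HB Require Import structures.
From mathcomp Require Import all_boot all_order all_algebra.
From mathcomp Require Import fraction.
Set Implicit Arguments. Unset Strict Implicit. Unset Printing Implicit Defensive.
Import Order.TTheory GRing.Theory Num.Theory.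
Local Open Scope ring_scope.

(* K = Q(q), realised as the field of fractions of Z[q]. *)
Definition K : fieldType := {fraction {poly int}}.

Definition qv : K := tofrac ('X : {poly int}).

Definition qint (n : int) : K := (qv ^ n - qv ^ (- n)) / (qv - qv^-1).

Definition qfact (n : nat) : K := \prod_(1 <= i < n.+1) qint i%:Z.

Definition gpoly (n : nat) (x : K) : K :=
  if odd n then x * \prod_(1 <= i < (n./2).+1) (x ^+ 2 - qint (2 * i)%N%:Z ^+ 2)
  else \prod_(0 <= i < n./2) (x ^+ 2 - qint (2 * i)%N%:Z ^+ 2).

Definition gdiv (n : nat) (x : K) : K := gpoly n x / qfact n.

(* membership in the subring Z[q, q^{-1}] of Q(q) *)
Definition laurent (x : K) : Prop :=
  exists (p : {poly int}) (k : nat), x = tofrac p / qv ^+ k.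

From HB Require Import structures.
From mathcomp Require Import all_boot all_order all_algebra.
From mathcomp Require Import fraction ring zify.
Import GRing.Theory.
Local Open Scope ring_scope.
Set Implicit Arguments. Unset Strict Implicit. Unset Printing Implicit Defensive.

(* With x = [2l], every factor x^2 - [2i]^2 of g_n(x) splits as [2l-2i][2l+2i],
   so g_{2m+1}([2l]) is the product of the 2m+1 quantum integers
   [2(l-m)], [2(l-m+1)], ..., [2(l+m)].  Since [2k]_q = [2]_q [k]_{q^2} and
   [2k]_q = [k]_q (q^k + q^-k), dividing by [2m+1]! leaves the Gaussian binomial
   coefficient [l+m choose 2m+1]_{q^2} times prod_{k <= 2m+1} (q^k + q^-k).  As
   g_{2m+2}(x) = x g_{2m+1}(x), the even case is a sum of two such binomials times
   the same product.  Gaussian binomials with an arbitrary integer top are Laurent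
   polynomials: the q-Pascal recurrence can be run both upwards and downwards
   from [N choose N] = 1. *)

Section QuantumIntegers.
Variables (F : fieldType) (q : F).
Hypothesis q_neq0 : q != 0.

Definition qnum (k : int) : F := (q ^ k - q ^ (- k)) / (q - q^-1).
Definition qsum (k : int) : F := q ^ k + q ^ (- k).

Let expzN k : q ^ (- k) = (q ^ k)^-1. Proof. by rewrite invr_expz. Qed.
Let expzD a b : q ^ (a + b) = q ^ a * q ^ b. Proof. exact: expfzDr. Qed.

(* Treating (q - q^-1)^-1 as an opaque constant, the identities below need no
   assumption on q - q^-1. *)
Let qnumE k : qnum k = (q ^ k - (q ^ k)^-1) * (q - q^-1)^-1.
Proof. by rewrite /qnum expzN. Qed.

Lemma qnum0 : qnum 0 = 0.
Proof. by rewrite /qnum oppr0 subrr mul0r. Qed.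

Lemma qnumD a b : qnum (a + b) = q ^ b * qnum a + q ^ (- a) * qnum b.
Proof.
rewrite !qnumE !expzD expzN; move: (q - q^-1)^-1 => c.
have := expfz_neq0 a q_neq0; have := expfz_neq0 b q_neq0.
by move: (q ^ a) (q ^ b) => u v v0 u0; field; rewrite u0 v0.
Qed.

Lemma qnumM_qsum a b : qnum a * qsum b = qnum (a + b) + qnum (a - b).
Proof.
rewrite /qsum !qnumE !expzD !expzN; move: (q - q^-1)^-1 => c.
have := expfz_neq0 a q_neq0; have := expfz_neq0 b q_neq0.
by move: (q ^ a) (q ^ b) => u v v0 u0; field; rewrite u0 v0.
Qed.

Lemma qnum_sqr_sub a b : qnum a ^+ 2 - qnum b ^+ 2 = qnum (a - b) * qnum (a + b).
Proof.
rewrite !qnumE !expzD !expzN; move: (q - q^-1)^-1 => c.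
have := expfz_neq0 a q_neq0; have := expfz_neq0 b q_neq0.
by move: (q ^ a) (q ^ b) => u v v0 u0; field; rewrite u0 v0.
Qed.

Lemma qnum_double k : qnum (2 * k) = qnum k * qsum k.
Proof. by rewrite qnumM_qsum subrr qnum0 addr0 mulr_natl mulr2n. Qed.

End QuantumIntegers.

Section GaussianBinomial.
Variables (F : fieldType) (q : F).
Hypotheses (q_neq0 : q != 0) (q_not_root : forall n, q ^+ n.+1 != 1).

Let expr_subV_neq0 n : q ^+ n.+1 - (q ^+ n.+1)^-1 != 0.
Proof.
have qn0 : q ^+ n.+1 != 0 by rewrite expf_neq0.
have -> : q ^+ n.+1 - (q ^+ n.+1)^-1 = (q ^+ (n.*2.+1).+1 - 1) / q ^+ n.+1.
  rewrite -doubleS -muln2 exprM; move: (q ^+ n.+1) qn0 => u u0.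
  by field.
by rewrite mulf_neq0 ?invr_neq0 // subr_eq0 q_not_root.
Qed.

Lemma qnum_neq0 (n : nat) : qnum q n.+1 != 0.
Proof.
rewrite /qnum -invr_expz mulf_neq0 ?invr_neq0 //; first exact: expr_subV_neq0.
by have := expr_subV_neq0 0; rewrite expr1.
Qed.

Lemma qsum_neq0 (n : nat) : qsum q n.+1 != 0.
Proof.
have := qnum_neq0 (n.*2.+1); rewrite -doubleS -mul2n PoszM qnum_double //.
by rewrite mulf_eq0 negb_or => /andP[].
Qed.

(* [qbinom a N] is the Gaussian binomial coefficient [a+N-1 choose N]_q. *)
Definition qbinom (a : int) (N : nat) : F :=
  \prod_(i < N) qnum q (a + i%:Z) / \prod_(i < N) qnum q i.+1.

Lemma qbinomSr a N : qbinom a N.+1 = qbinom a N * (qnum q (a + N) / qnum q N.+1).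
Proof. by rewrite /qbinom !big_ord_recr mulf_div. Qed.

Lemma qbinomSl a N : qbinom (a - 1) N.+1 = qnum q (a - 1) / qnum q N.+1 * qbinom a N.
Proof.
rewrite /qbinom big_ord_recl big_ord_recr /= addr0 mulf_div [_ * qnum q N.+1]mulrC.
congr (_ / _); congr (_ * _); apply: eq_bigr => i _; congr (qnum q _).
rewrite /bump /=; lia.
Qed.

Lemma qbinom1 N : qbinom 1 N = 1.
Proof.
rewrite /qbinom (eq_bigr (fun i : 'I_N => qnum q i.+1)) => [|i _].
  by rewrite divff //; apply/prodf_neq0 => i _; exact: qnum_neq0.
by congr (qnum q _); lia.
Qed.

Lemma qbinom_pascal a N :
  qbinom a N.+1 = q ^ N.+1 * qbinom (a - 1) N.+1 + q ^ (1 - a) * qbinom a N.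
Proof.
rewrite qbinomSl qbinomSr.
have -> : a + N%:Z = a - 1 + N.+1 by lia.
rewrite qnumD // opprB.
by field; rewrite qnum_neq0.
Qed.

Lemma qbinomS_center a (m : nat) :
  qbinom (a - m%:Z) m.*2.+1 * (qnum q a / qnum q m.+1) =
  qbinom (a - m%:Z) m.*2.+2 + qbinom (a - m%:Z - 1) m.*2.+2.
Proof.
rewrite [qbinom _ _.+2]qbinomSr qbinomSl.
have -> : (m.*2.+2)%:Z = 2 * (m.+1)%:Z by lia.
have -> : a - m%:Z + (m.*2.+1)%:Z = a + (m.+1)%:Z by lia.
have -> : a - m%:Z - 1 = a - (m.+1)%:Z by lia.
rewrite qnum_double // -[qnum q (a + _)](addrK (qnum q (a - (m.+1)%:Z))).
rewrite -qnumM_qsum //.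
by field; rewrite qnum_neq0 qsum_neq0.
Qed.

End GaussianBinomial.

Section DoubleBase.
Variables (F : fieldType) (q : F).
Hypotheses (q_neq0 : q != 0) (q_not_root : forall n, q ^+ n.+1 != 1).

Lemma expr2_not_root n : (q ^+ 2) ^+ n.+1 != 1.
Proof. by rewrite -exprM mul2n doubleS q_not_root. Qed.

Lemma qnum_double_base k : qnum q (2 * k) = qnum q 2 * qnum (q ^+ 2) k.
Proof.
have qk0 := expfz_neq0 k q_neq0.
rewrite /qnum -!invr_expz (exprz_exp q 2 k : (q ^+ 2) ^ k = _).
rewrite mulr_natl mulr2n expfzDr //.
move: (q ^ k) qk0 => u u0.
by field; rewrite q_neq0 u0 -expr2 -exprM !subr_eq0 !q_not_root.
Qed.

Lemma prod_qnum_double N (f : 'I_N -> int) :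
  \prod_(i < N) qnum q (2 * f i) = qnum q 2 ^+ N * \prod_(i < N) qnum (q ^+ 2) (f i).
Proof.
under eq_bigr => i _ do rewrite qnum_double_base.
by rewrite big_split prodr_const card_ord.
Qed.

Lemma qbinom_double a N :
  \prod_(i < N) qnum q (2 * (a + i%:Z)) / \prod_(i < N) qnum q i.+1 =
  qbinom (q ^+ 2) a N * \prod_(i < N) qsum q i.+1.
Proof.
have den : \prod_(i < N) qnum q i.+1 * \prod_(i < N) qsum q i.+1 =
    qnum q 2 ^+ N * \prod_(i < N) qnum (q ^+ 2) i.+1.
  rewrite -big_split -(prod_qnum_double (fun i : 'I_N => i.+1%:Z)).
  by apply: eq_bigr => i _; rewrite qnum_double.
have two_neq0 : qnum q 2 ^+ N != 0.
  by rewrite expf_neq0 // (qnum_neq0 q_neq0 q_not_root 1).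
have facts_neq0 : \prod_(i < N) qnum q i.+1 != 0.
  by apply/prodf_neq0 => i _; exact: qnum_neq0.
have qsums_neq0 : \prod_(i < N) qsum q i.+1 != 0.
  by apply/prodf_neq0 => i _; exact: qsum_neq0.
rewrite prod_qnum_double /qbinom.
have -> : \prod_(i < N) qnum (q ^+ 2) i.+1 =
    \prod_(i < N) qnum q i.+1 * \prod_(i < N) qsum q i.+1 / qnum q 2 ^+ N.
  by rewrite den mulrC mulKf.
by field; rewrite two_neq0 facts_neq0 qsums_neq0.
Qed.

Lemma qnum_double_ratio a b :
  qnum q (2 * a) / qnum q (2 * b) = qnum (q ^+ 2) a / qnum (q ^+ 2) b.
Proof.
rewrite !qnum_double_base -mulf_div divff ?mul1r //.
exact: (qnum_neq0 q_neq0 q_not_root 1).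
Qed.

End DoubleBase.

(* The ring and field tactics do not terminate on K, hence all field algebra is
   done over an abstract field above. *)
Lemma qv_neq0 : qv != 0.
Proof. by rewrite /qv tofrac_eq0 polyX_eq0. Qed.

Lemma qv_not_root n : qv ^+ n.+1 != 1.
Proof.
rewrite /qv -tofracXn -tofrac1 tofrac_eq.
apply/eqP => /(congr1 (fun p : {poly int} => size p)).
by rewrite size_polyXn size_poly1.
Qed.

Lemma qintE : qint = qnum qv.
Proof. by []. Qed.

Lemma laurent1 : laurent 1.
Proof. by exists 1, 0%N; rewrite tofrac1 expr0 divr1. Qed.

Lemma laurentN x : laurent x -> laurent (- x).
Proof. by move=> [p [a ->]]; exists (- p), a; rewrite tofracN mulNr. Qed.

Lemma laurentD x y : laurent x -> laurent y -> laurent (x + y).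
Proof.
move=> [p [a ->]] [r [b ->]]; exists (p * 'X^b + r * 'X^a), (a + b)%N.
by rewrite tofracD !tofracM !tofracXn -/qv exprD addf_div ?(expf_neq0 _ qv_neq0).
Qed.

Lemma laurentM x y : laurent x -> laurent y -> laurent (x * y).
Proof.
move=> [p [a ->]] [r [b ->]]; exists (p * r), (a + b)%N.
by rewrite tofracM exprD mulf_div.
Qed.

Lemma laurent_exprz z : laurent (qv ^ z).
Proof.
case: z => n; first by exists 'X^n, 0%N; rewrite expr0 divr1 tofracXn.
by exists 1, n.+1; rewrite tofrac1 div1r.
Qed.

Lemma laurent_prod N (f : 'I_N -> K) :
  (forall i, laurent (f i)) -> laurent (\prod_(i < N) f i).
Proof. by move=> Lf; apply: big_ind => //; [exact: laurent1 | exact: laurentM]. Qed.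

Lemma laurent_qbinom a N : laurent (qbinom (qv ^+ 2) a N).
Proof.
elim: N a => [|N IH] a; first by rewrite /qbinom !big_ord0 divr1; exact: laurent1.
have Q_neq0 : qv ^+ 2 != 0 by rewrite expf_neq0 ?qv_neq0.
have Q_not_root := expr2_not_root qv_not_root.
have laurentQ z : laurent ((qv ^+ 2) ^ z).
  by rewrite (exprz_exp qv 2 z : (qv ^+ 2) ^ z = _); exact: laurent_exprz.
have pascal := qbinom_pascal Q_neq0 Q_not_root.
suff: forall k, laurent (qbinom (qv ^+ 2) (1 + k) N.+1).
  by move/(_ (a - 1)); rewrite addrC subrK.
elim/int_rect => [|k Lk|k Lk].
- by rewrite addr0 (qbinom1 Q_neq0 Q_not_root); exact: laurent1.
- rewrite pascal (_ : 1 + k.+1%:Z - 1 = 1 + k); last by lia.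
  by apply: laurentD; apply: laurentM.
- have -> : qbinom (qv ^+ 2) (1 - k.+1%:Z) N.+1 = (qv ^+ 2) ^ (- N.+1%:Z) *
      (qbinom (qv ^+ 2) (1 - k%:Z) N.+1 - (qv ^+ 2) ^ k%:Z * qbinom (qv ^+ 2) (1 - k%:Z) N).
    rewrite [qbinom _ (1 - k%:Z) N.+1]pascal subKr addrK mulrA.
    rewrite -(expfzDr _ _ Q_neq0) addNr expr0z mul1r.
    by congr qbinom; lia.
  by apply: laurentM => //; apply: laurentD => //; apply: laurentN; apply: laurentM.
Qed.

Lemma laurent_qsums N : laurent (\prod_(i < N) qsum qv i.+1).
Proof. by apply: laurent_prod => i; apply: laurentD; exact: laurent_exprz. Qed.

Lemma gpoly_odd m x :
  gpoly m.*2.+1 x = x * \prod_(1 <= i < m.+1) (x ^+ 2 - qint (2 * i)%N%:Z ^+ 2).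
Proof. by rewrite /gpoly /= odd_double /= uphalf_double. Qed.

Lemma gpoly_even_odd m x : gpoly m.+1.*2 x = x * gpoly m.*2.+1 x.
Proof.
rewrite gpoly_odd /gpoly odd_double half_double big_ltn // muln0.
by rewrite qintE qnum0 expr0n subr0 mulrA -expr2.
Qed.

Lemma gpoly_odd_qint l m :
  gpoly m.*2.+1 (qint (2 * l)) = \prod_(0 <= i < m.*2.+1) qint (2 * (l - m%:Z + i%:Z)).
Proof.
elim: m => [|m IH]; first by rewrite gpoly_odd big_geq // mulr1 big_nat1 subr0 addr0.
rewrite gpoly_odd big_nat_recr // mulrA -gpoly_odd IH.
rewrite qintE (qnum_sqr_sub qv_neq0).
rewrite doubleS [RHS]big_nat_recl // [in RHS]big_nat_recr // -qintE mulrCA.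
congr (qint _ * (_ * qint _)); try lia.
by apply: eq_big_nat => i _; congr qint; lia.
Qed.

Lemma qfact_prod N : qfact N = \prod_(i < N) qint i.+1.
Proof. by rewrite /qfact big_add1 big_mkord. Qed.

Lemma qfactS n : qfact n.+1 = qfact n * qint n.+1.
Proof. by rewrite /qfact big_nat_recr. Qed.

Lemma gdiv_odd l m :
  gdiv m.*2.+1 (qint (2 * l)) =
  qbinom (qv ^+ 2) (l - m%:Z) m.*2.+1 * \prod_(i < m.*2.+1) qsum qv i.+1.
Proof.
rewrite /gdiv gpoly_odd_qint big_mkord qfact_prod qintE.
exact: (qbinom_double qv_neq0 qv_not_root).
Qed.

Lemma gdiv_even l m :
  gdiv m.+1.*2 (qint (2 * l)) =
  (qbinom (qv ^+ 2) (l - m%:Z) m.*2.+2 + qbinom (qv ^+ 2) (l - m%:Z - 1) m.*2.+2) *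
  \prod_(i < m.*2.+1) qsum qv i.+1.
Proof.
have Q_neq0 : qv ^+ 2 != 0 by rewrite expf_neq0 ?qv_neq0.
rewrite -(qbinomS_center Q_neq0 (expr2_not_root qv_not_root)) mulrAC.
rewrite -gdiv_odd /gdiv gpoly_even_odd doubleS qfactS [qint _ * _]mulrC -mulf_div.
have -> : (m.*2.+2)%:Z = 2 * (m.+1)%:Z by lia.
by rewrite qintE (qnum_double_ratio qv_neq0 qv_not_root).
Qed.

Theorem lemma2p5 (l : int) (n : nat) : laurent (gdiv n (qint (2 * l))).
Proof.
rewrite -[n]odd_double_half; case: (odd n); set m := n./2.
  rewrite add1n gdiv_odd.
  by apply: laurentM; [exact: laurent_qbinom | exact: laurent_qsums].
rewrite add0n; case: m => [|m].
  by rewrite /gdiv /gpoly /qfact !big_geq // divr1; exact: laurent1.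
rewrite gdiv_even; apply: laurentM; last exact: laurent_qsums.
by apply: laurentD; exact: laurent_qbinom.
Qed.
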